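(* Let $n\ge3$, $2\le t\le\lceil n/2\rceil$, and let $\mathsf{X}=\mathsf{C}_n(t;i,j)$ with $1\le i<j\le t$ and $j\ne i+1$. Then \[F_2(\mathsf{X})=\begin{cases}(t-1)(n-t+1) & \text{if } i=1 \text{ and } j=t,\\ (n-t+1)\big[(t-j+i)(j-i+1)-1\big] & \text{otherwise.}\end{cases}\]
   Context: $\mathsf{C}_n(t;i,j)$ ($i<j$) denotes the $n$-cycle with vertices $v_1,\dots,v_n$ in cyclic order (edges $v_kv_{k+1}$ and $v_nv_1$), with marked (ramified) vertices $v_1$ and $v_t$, together with one additional edge between $v_i$ and $v_j$. $F_2$ is the number of spanning forests consisting of two trees, one containing $v_1$ and the other containing $v_t$. *)

From mathcomp Require Import all_boot.
Set Implicit Arguments. Unset Strict Implicit. Unset Printing Implicit Defensive.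

(* Vertex v_k (1 <= k <= n) is the ordinal k-1 : 'I_n.
   Edges are indexed by 'I_n.+1 : edge e < n is the cycle edge v_{e+1} v_{e+2}
   (indices mod n, so edge n-1 is v_n v_1); edge n is the extra edge v_i v_j. *)
Definition Cend1 (n i j : nat) (e : 'I_n.+1) : nat :=
  if (e < n)%N then nat_of_ord e else i.-1.
Definition Cend2 (n i j : nat) (e : 'I_n.+1) : nat :=
  if (e < n)%N then (e.+1 %% n)%N else j.-1.

Definition Cadj (n i j : nat) (F : {set 'I_n.+1}) : rel 'I_n :=
  fun x y => [exists e in F,
     ((Cend1 i j e == x) && (Cend2 i j e == y))
  || ((Cend1 i j e == y) && (Cend2 i j e == x))].

Definition Cacyclic (n i j : nat) (F : {set 'I_n.+1}) : bool :=
  [forall e in F, forall x : 'I_n, forall y : 'I_n,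
     ((nat_of_ord x == Cend1 i j e) && (nat_of_ord y == Cend2 i j e))
       ==> ~~ connect (Cadj i j (F :\ e)) x y].

(* F is a spanning forest with two trees, one containing v_1 (= 0) and the
   other containing v_t (= t-1). *)
Definition two_forest (n t i j : nat) (F : {set 'I_n.+1}) : bool :=
  [&& Cacyclic i j F,
      [forall x : 'I_n, forall y : 'I_n,
         ((nat_of_ord x == 0) && (nat_of_ord y == t.-1))
           ==> ~~ connect (Cadj i j F) x y]
    & [forall z : 'I_n, exists x : 'I_n,
         ((nat_of_ord x == 0) || (nat_of_ord x == t.-1))
           && connect (Cadj i j F) x z]].

Definition F2 (n t i j : nat) : nat :=
  #|[set F : {set 'I_n.+1} | two_forest t i j F]|.

(* Call v_1 ... v_t the short arc and v_t ... v_n v_1 the long arc of the cycle.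
   If F is a spanning two-forest separating v_1 from v_t, each arc misses an
   edge of F, and two missing edges on the same arc cut off the vertices between
   them unless the chord leaves that segment.  Hence F misses exactly one edge k
   of the long arc, one edge x of the short arc, and a third edge y that is
   either the chord or a short-arc edge on the other side of the chord from x
   (one of x, y lies between v_i and v_j, the other does not).  Conversely every
   such triple is the complement of a two-forest: an edge on a cycle could be
   deleted without changing connectivity, leaving four missing edges.  Counting
   the triples gives (n-t+1) ((t-1) + (j-i) (t-1-(j-i))). *)

From mathcomp Require Import all_boot zify.
Set Implicit Arguments. Unset Strict Implicit. Unset Printing Implicit Defensive.

Lemma forall2_inord m p q (R : rel 'I_m.+1) : p <= m -> q <= m ->
  [forall x : 'I_m.+1, forall y : 'I_m.+1, ((x == p :> nat) && (y == q :> nat)) ==> R x y]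
    = R (inord p) (inord q).
Proof.
move=> pm qm; apply/idP/idP.
  by move/forallP/(_ (inord p))/forallP/(_ (inord q)); rewrite !inordK ?eqxx.
move=> Rpq; apply/forallP=> x; apply/forallP=> y; apply/implyP=> /andP[/eqP xp /eqP yq].
by rewrite -[x]inord_val -[y]inord_val xp yq.
Qed.

Lemma exists2_inord m p q (P : pred 'I_m.+1) : p <= m -> q <= m ->
  [exists x : 'I_m.+1, ((x == p :> nat) || (x == q :> nat)) && P x]
    = P (inord p) || P (inord q).
Proof.
move=> pm qm; apply/existsP/orP => [[x /andP[/orP[] /eqP xpq Px]]|[Pp|Pq]].
- by left; rewrite -xpq inord_val.
- by right; rewrite -xpq inord_val.
- by exists (inord p); rewrite inordK ?eqxx.
- by exists (inord q); rewrite inordK ?eqxx ?orbT.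
Qed.

Lemma exists_notin_or_inord m (A : {set 'I_m.+1}) (P : pred nat) :
  (exists2 k : 'I_m.+1, P k & k \notin A) \/ (forall k, k <= m -> P k -> inord k \in A).
Proof.
have [/exists_inP[k Pk kA]|/exists_inPn noGap] :=
  boolP [exists (k : 'I_m.+1 | P k), k \notin A]; first by left; exists k.
by right=> k km Pk; have := noGap (inord k); rewrite unfold_in /= inordK // negbK; apply.
Qed.

Lemma in_setC3 m (k x y : 'I_m.+1) e : e <= m ->
  (inord e \in ~: [set k; x; y]) = [&& e != k, e != x & e != y].
Proof. by move=> em; rewrite !inE -!val_eqE /= inordK // !negb_or andbA. Qed.

Lemma card_set3_le (T : finType) (a b c : T) : #|[set a; b; c]| <= 3.
Proof. by rewrite -setUA cardsU1 cards2; case: (a \notin _); case: (b != c). Qed.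

Lemma card_ord_interval m lo hi : hi <= m -> #|[set e : 'I_m | lo <= e < hi]| = hi - lo.
Proof.
elim: hi => [|h IHh] hm.
  by rewrite (_ : [set e | _] = set0) ?cards0 //; apply/setP => e; rewrite !inE; lia.
have [loh|hlo] := leqP lo h; last first.
  by rewrite (_ : [set e | _] = set0) ?cards0; [lia|apply/setP => e; rewrite !inE; lia].
rewrite (_ : [set e | _] = Ordinal hm |: [set e : 'I_m | lo <= e < h]); last first.
  by apply/setP => e; rewrite !inE -val_eqE /=; lia.
by rewrite cardsU1 IHh ?inE /= ?ltnn ?andbF; lia.
Qed.

(* Below, the cycle has n+1 vertices 'I_n.+1 and edges 'I_n.+2, the chord being
   ord_max, and r = t-1 is the vertex v_t: cycle edges e < r form the short arc
   and r <= e <= n the long arc. *)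
Section Connectivity.

Variables n i j : nat.
Implicit Types G H : {set 'I_n.+2}.

Lemma Cadj_sym G : symmetric (Cadj i j G).
Proof.
by move=> x y; apply/existsP/existsP => -[e /andP[eG xy]]; exists e; rewrite eG orbC.
Qed.

Lemma connectC G x y : connect (Cadj i j G) x y = connect (Cadj i j G) y x.
Proof. exact/sym_connect_sym/Cadj_sym. Qed.

Lemma connect_subset G H : G \subset H ->
  subrel (connect (Cadj i j G)) (connect (Cadj i j H)).
Proof.
move=> GH; apply: connect_sub => x y /existsP[e /andP[eG xy]].
by apply: connect1; apply/existsP; exists e; rewrite (subsetP GH _ eG).
Qed.

Lemma connect_invariant G (S : pred nat) :
  {in G, forall e, S (Cend1 i j e) = S (Cend2 i j e)} ->
  forall x y, connect (Cadj i j G) x y -> S x = S y.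
Proof.
move=> GS x y; apply: (@closed_connect _ _ (fun v : 'I_n.+1 => S v)) => u v.
case/existsP=> e /andP[/GS eS /orP[] /andP[/eqP e1 /eqP e2]];
  by rewrite !unfold_in /= -e1 -e2.
Qed.

Lemma connect_segment G lo hi : 0 < lo <= hi -> hi <= n ->
  inord lo.-1 \notin G -> inord hi \notin G ->
  (ord_max \in G -> (lo <= i.-1 <= hi) = (lo <= j.-1 <= hi)) ->
  forall x y, connect (Cadj i j G) x y -> (lo <= x <= hi) = (lo <= y <= hi).
Proof.
move=> lohi hin loG hiG chordG.
apply: (connect_invariant (S := fun v => lo <= v <= hi)) => e eG.
rewrite /Cend1 /Cend2; case: ifP => e_cycle; last first.
  have eM : e = ord_max by apply/val_inj => /=; have := ltn_ord e; lia.
  by apply: chordG; rewrite -eM.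
have neq_e k : k <= n.+1 -> inord k \notin G -> nat_of_ord e != k.
  by move=> kn kG; apply: contraNneq kG => <-; rewrite inord_val.
have := neq_e _ _ loG; have := neq_e _ _ hiG.
have [en|en] := ltnP e n; first rewrite modn_small //.
  by move=> /(_ _)/eqP h1 /(_ _)/eqP h2; apply/idP/idP; lia.
rewrite (_ : e.+1 = n.+1) ?modnn; last lia.
by move=> /(_ _)/eqP h1 /(_ _)/eqP h2; apply/idP/idP; lia.
Qed.

Lemma cycle_edge_adj G k : k < n -> inord k \in G ->
  Cadj i j G (inord k) (inord k.+1).
Proof.
move=> kn kG; apply/existsP; exists (inord k); rewrite kG /Cend1 /Cend2 !inordK //; try lia.
by rewrite (_ : k < n.+1) ?modn_small ?eqxx //; lia.
Qed.

Lemma connect_arc G p q : p <= n -> q <= n ->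
  (forall k, minn p q <= k < maxn p q -> inord k \in G) ->
  connect (Cadj i j G) (inord p) (inord q).
Proof.
wlog pq : p q / p <= q => [sym pn qn arcG|].
  have [/sym|/ltnW/sym] := leqP p q; first exact.
  by rewrite connectC; apply=> // k; rewrite minnC maxnC; apply: arcG.
rewrite (minn_idPl pq) (maxn_idPr pq); elim: q pq => [|q IHq] pq _ qn arcG.
  by rewrite (_ : p = 0) //; lia.
have [pq'|] := leqP p q; last by move=> ?; rewrite (_ : p = q.+1) //; lia.
apply: connect_trans (IHq pq' _ _ _) (connect1 (cycle_edge_adj _ _)) => //; try lia.
- by move=> k kq; apply: arcG; lia.
- by apply: arcG; lia.
Qed.

Lemma connect_wrap G p : p <= n -> (forall k, p <= k <= n -> inord k \in G) ->
  connect (Cadj i j G) (inord p) (inord 0).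
Proof.
move=> pn arcG; apply: (connect_trans (y := inord n)).
  by apply: connect_arc => // k k_in; apply: arcG; lia.
apply: connect1; apply/existsP; exists (inord n); rewrite arcG ?pn ?leqnn //.
by rewrite /Cend1 /Cend2 !inordK // ltnSn modnn !eqxx.
Qed.

Lemma connect_arc_cut (k x y : 'I_n.+2) p q : p <= n -> q <= n ->
  ~~ (minn p q <= k < maxn p q) -> ~~ (minn p q <= x < maxn p q) ->
  ~~ (minn p q <= y < maxn p q) ->
  connect (Cadj i j (~: [set k; x; y])) (inord p) (inord q).
Proof.
by move=> pn qn kpq xpq ypq; apply: connect_arc => // e epq; rewrite in_setC3; lia.
Qed.

Hypotheses (a_le_n : i.-1 <= n) (b_le_n : j.-1 <= n).

Lemma chord_adj G : ord_max \in G -> Cadj i j G (inord i.-1) (inord j.-1).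
Proof.
by move=> cG; apply/existsP; exists ord_max; rewrite cG /Cend1 /Cend2 /= ltnn !inordK // !eqxx.
Qed.

Lemma Cend_le (e : 'I_n.+2) : Cend1 i j e <= n /\ Cend2 i j e <= n.
Proof. by rewrite /Cend1 /Cend2; case: ifP; split; lia. Qed.

Lemma connect_setD1 G e :
  connect (Cadj i j (G :\ e)) (inord (Cend1 i j e)) (inord (Cend2 i j e)) ->
  subrel (connect (Cadj i j G)) (connect (Cadj i j (G :\ e))).
Proof.
move=> ends; apply: connect_sub => x y /existsP[e' /andP[e'G xy]].
have [e'e|e'e] := eqVneq e' e; last first.
  by apply: connect1; apply/existsP; exists e'; rewrite !inE e'e e'G.
have inordE (u : 'I_n.+1) (k : nat) : k = u -> u = inord k.
  by move=> ku; apply/val_inj; rewrite /= inordK ku ?ltn_ord.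
move: xy; rewrite e'e => /orP[] /andP[/eqP/inordE-> /eqP/inordE->] //.
by rewrite connectC.
Qed.

End Connectivity.

Section TwoForests.

Variables n i j r : nat.
Hypotheses (r_gt0 : 0 < r) (r_le_n : r <= n) (a_lt_b : i.-1 < j.-1) (b_le_r : j.-1 <= r).
Implicit Types G F : {set 'I_n.+2}.

Local Notation under_chord e := (i.-1 <= e < j.-1).

Let a_le_n : i.-1 <= n. Proof. lia. Qed.
Let b_le_n : j.-1 <= n. Proof. lia. Qed.

Definition forest G := [forall e in G,
  ~~ connect (Cadj i j (G :\ e)) (inord (Cend1 i j e)) (inord (Cend2 i j e))].
Definition separating G := ~~ connect (Cadj i j G) (inord 0) (inord r).
Definition spanning G :=
  [forall z, connect (Cadj i j G) (inord 0) z || connect (Cadj i j G) (inord r) z].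

Lemma two_forestE F : two_forest r.+1 i j F = [&& forest F, separating F & spanning F].
Proof.
rewrite /two_forest /Cacyclic forall2_inord //=; congr [&& _, _ & _].
  apply: eq_forallb_in => e _; have [||e1 e2] := @Cend_le n i j _ _ e; try lia.
  exact: forall2_inord.
by apply: eq_forallb => z; rewrite exists2_inord.
Qed.

Lemma spanning_segment G lo hi : spanning G -> 0 < lo <= hi -> hi <= n ->
  inord lo.-1 \notin G -> inord hi \notin G ->
  (ord_max \in G -> (lo <= i.-1 <= hi) = (lo <= j.-1 <= hi)) -> lo <= r <= hi.
Proof.
move=> /forallP/(_ (inord lo)) spanG lohi hin loG hiG chordG.
have segE := connect_segment lohi hin loG hiG chordG.
by case/orP: spanG => /segE; rewrite !inordK //; lia.
Qed.

Lemma segment_separating G lo hi : 0 < lo -> lo <= r <= hi -> hi <= n ->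
  inord lo.-1 \notin G -> inord hi \notin G ->
  (ord_max \in G -> (lo <= i.-1 <= hi) = (lo <= j.-1 <= hi)) -> separating G.
Proof.
move=> lo0 lorhi hin loG hiG chordG; have lohi : 0 < lo <= hi by lia.
by apply/negP => /(connect_segment lohi hin loG hiG chordG); rewrite !inordK //; lia.
Qed.

Lemma long_gap G : separating G -> exists2 k : 'I_n.+2, r <= k <= n & k \notin G.
Proof.
move=> sepG; have [//|longG] := exists_notin_or_inord G (fun k => r <= k <= n).
by case/negP: sepG; rewrite connectC; apply: connect_wrap => // k kn; apply: longG; lia.
Qed.

Lemma long_gap_unique G (k k' : 'I_n.+2) : spanning G ->
  r <= k <= n -> r <= k' <= n -> k \notin G -> k' \notin G -> k = k'.
Proof.
wlog kk' : k k' / k <= k' => [sym spanG ? ? ? ?|spanG kr k'r kG k'G].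
  by have [/sym|/ltnW/sym] := leqP k k'; [apply|move=> ->].
apply/val_inj/eqP; rewrite eqn_leq kk' /=; apply: contraT; rewrite -ltnNge => ltkk'.
have := @spanning_segment G k.+1 k' spanG; rewrite /= !inord_val; lia.
Qed.

Lemma short_gap G : separating G -> exists2 m : 'I_n.+2, m < r & m \notin G.
Proof.
move=> sepG; have [//|shortG] := exists_notin_or_inord G (fun k => k < r).
by case/negP: sepG; apply: connect_arc => // k kr; apply: shortG; lia.
Qed.

(* Two short-arc gaps isolate the vertices between them unless the chord joins
   that segment to the rest. *)
Lemma short_gaps_cross G (m1 m2 : 'I_n.+2) : spanning G ->
  m1 < r -> m2 < r -> m1 != m2 -> m1 \notin G -> m2 \notin G ->
  ord_max \in G /\ under_chord m1 != under_chord m2.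
Proof.
wlog m12 : m1 m2 / m1 < m2 => [sym spanG m1r m2r m12 m1G m2G|spanG m1r m2r _ m1G m2G].
  have [lt12|lt21|/val_inj eq12] := ltngtP m1 m2; first exact: sym.
    have m21 : m2 != m1 by rewrite eq_sym.
    by have [chordG] := sym m2 m1 lt21 spanG m2r m1r m21 m2G m1G; rewrite eq_sym.
  by rewrite eq12 eqxx in m12.
have segment := @spanning_segment G m1.+1 m2 spanG; rewrite /= !inord_val in segment.
case chordG: (ord_max \in G); last by move: segment; rewrite chordG; lia.
by split=> //; apply: contraT; rewrite negbK => /eqP eqm; move: segment; lia.
Qed.

Lemma separating_chord_gap G (m : 'I_n.+2) : separating G -> ord_max \in G ->
  (forall k, k < r -> k != m -> inord k \in G) -> ~~ under_chord m.
Proof.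
move=> sepG chordG shortG; apply: contraNN sepG => um.
apply: (connect_trans (y := inord i.-1)).
  by apply: connect_arc => // k ka; apply: shortG; lia.
apply: (connect_trans (y := inord j.-1)).
  exact: connect1 (chord_adj a_le_n b_le_n chordG).
by apply: connect_arc => // k kb; apply: shortG; lia.
Qed.

Lemma short_gaps_le2 G (x x' e : 'I_n.+2) : spanning G -> x < r -> x' < r -> e < r ->
  x != x' -> x \notin G -> x' \notin G -> e \notin G -> (e == x) || (e == x').
Proof.
move=> spanG xr x'r er xx' xG x'G eG; apply: contraT; rewrite negb_or => /andP[ex ex'].
have [_] := short_gaps_cross spanG er xr ex eG xG.
have [_] := short_gaps_cross spanG er x'r ex' eG x'G.
have [_] := short_gaps_cross spanG xr x'r xx' xG x'G.
by case: (under_chord x); case: (under_chord x'); case: (under_chord e).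
Qed.

Lemma setC_gaps G (k x y : 'I_n.+2) : k \notin G -> x \notin G -> y \notin G ->
  (forall e : 'I_n.+2, r <= e <= n -> e \notin G -> e = k) ->
  (forall e : 'I_n.+2, e < r -> e \notin G -> (e == x) || (e == y)) ->
  (ord_max \notin G -> y = ord_max) ->
  ~: G = [set k; x; y].
Proof.
move=> kG xG yG longG shortG chordG; apply/setP => e; rewrite !inE.
apply/idP/idP => [eG|/orP[/orP[]|] /eqP-> //].
have [er|re] := ltnP e r; first by rewrite -orbA (shortG e er eG) orbT.
have [eM|eM] := eqVneq e ord_max.
  by move: eG; rewrite eM => /chordG ->; rewrite eqxx orbT.
by rewrite (longG e) ?eqxx //; have := ltn_ord e; move: eM; rewrite -val_eqE /=; lia.
Qed.

Definition cut_triple (p : 'I_n.+2 * ('I_n.+2 * 'I_n.+2)) : bool :=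
  let: (k, (x, y)) := p in
  [&& r <= k <= n, x < r & (y == ord_max) || [&& y < r, under_chord x & ~~ under_chord y]].

(* The second alternative, the chord present with a single short-arc gap, is
   ruled out for forests by [forest_short_gap]. *)
Lemma missing_edges G : separating G -> spanning G ->
  exists k x y : 'I_n.+2, ~: G = [set k; x; y] /\
    cut_triple (k, (x, y)) || [&& y == x, r <= k <= n, x < r & ~~ under_chord x].
Proof.
move=> sepG spanG; have [k kr kG] := long_gap sepG; have [x xr xG] := short_gap sepG.
have longG (e : 'I_n.+2) : r <= e <= n -> e \notin G -> e = k.
  by move=> er eG; apply: long_gap_unique spanG er kr eG kG.
have [chordG|chordG] := boolP (ord_max \in G); last first.
  exists k, x, ord_max; rewrite /= kr xr eqxx; split=> //.
  apply: setC_gaps => // e er eG; apply/orP; left; apply: contraT => ex.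
  by case: (short_gaps_cross spanG er xr ex eG xG); rewrite (negbTE chordG).
have [[x' /andP[x'r x'x] x'G]|xonly] :=
  exists_notin_or_inord G (fun e => (e < r) && (e != x)).
  have xx' : x != x' by rewrite -val_eqE eq_sym.
  have shortG (e : 'I_n.+2) : e < r -> e \notin G -> (e == x) || (e == x').
    by move=> er eG; apply: short_gaps_le2 spanG xr x'r er xx' xG x'G eG.
  have [_ uxx'] := short_gaps_cross spanG xr x'r xx' xG x'G.
  have [ux|ux] := boolP (under_chord x).
    exists k, x, x'; rewrite /= kr xr x'r ux; move: uxx'; rewrite ux => /= -> .
    by split; rewrite ?orbT //; apply: setC_gaps => // /negP.
  exists k, x', x; rewrite /= kr x'r xr ux andbT.
  move: uxx'; rewrite (negbTE ux) /= negbK => ->.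
  split; rewrite ?orbT //; apply: setC_gaps => // [e er eG|/negP //].
  by rewrite orbC shortG.
have shortG (e : nat) : e < r -> e != x -> inord e \in G.
  by move=> er ex; apply: xonly; rewrite ?er ?ex //; lia.
exists k, x, x; rewrite /= kr xr eqxx (separating_chord_gap sepG chordG shortG) !orbT.
split=> //; apply: setC_gaps => // [e er eG|/negP //].
by rewrite orbb; apply: contraLR eG => ex; rewrite negbK -[e]inord_val shortG // -val_eqE.
Qed.

Lemma cut_separating k x y : cut_triple (k, (x, y)) -> separating (~: [set k; x; y]).
Proof.
case/and3P=> kr xr /orP[/eqP yM|/and3P[yr ux uy]].
  apply: (@segment_separating _ x.+1 k); rewrite ?in_setC3; try lia.
  by rewrite !inE yM eqxx orbT.
by apply: (@segment_separating _ y.+1 k); rewrite ?in_setC3; lia.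
Qed.

Lemma cut_spanning k x y : cut_triple (k, (x, y)) -> spanning (~: [set k; x; y]).
Proof.
case/and3P=> kr xr yE.
have yv : (y == n.+1 :> nat) || (y < r).
  by case/orP: yE => [/eqP-> /=|/and3P[yr _ _]]; rewrite ?eqxx ?yr ?orbT.
apply/forallP => z; rewrite -(inord_val z); have zn := ltn_ord z.
have [kz|zk] := ltnP k z.
  by rewrite connectC; apply/orP; left; apply: connect_wrap => // e ez; rewrite in_setC3; lia.
case/orP: yE => [/eqP yM|/and3P[yr ux uy]].
  have {}yv : nat_of_ord y = n.+1 by rewrite yM.
  by have [zx|xz] := leqP z x; apply/orP; [left|right]; apply: connect_arc_cut; lia.
have chordF : ord_max \in ~: [set k; x; y] by rewrite !inE -!val_eqE /=; lia.
have chord := connect1 (chord_adj a_le_n b_le_n chordF).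
have [zlo|loz] := leqP z (minn x y); first by apply/orP; left; apply: connect_arc_cut; lia.
have [hiz|zhi] := ltnP (maxn x y) z; first by apply/orP; right; apply: connect_arc_cut; lia.
(* z lies between the two gaps; this segment holds one chord end, and the chord
   leads to a root. *)
have [yx|xy] := ltnP y x; apply/orP; [right|left].
  rewrite connectC; apply: (connect_trans (y := inord i.-1)).
    by apply: connect_arc_cut; lia.
  by apply: connect_trans chord _; apply: connect_arc_cut; lia.
apply: (connect_trans (y := inord i.-1)); first by apply: connect_arc_cut; lia.
by apply: connect_trans chord _; apply: connect_arc_cut; lia.
Qed.

Lemma card_cut_triple k x y : cut_triple (k, (x, y)) -> #|[set k; x; y]| = 3.
Proof.
case/and3P=> kr xr yE; have kx : k != x by rewrite -val_eqE /=; lia.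
have [ky xy] : k != y /\ x != y.
  by rewrite -!val_eqE /=; case/orP: yE => [/eqP-> /=|/and3P[yr ux uy]]; split; lia.
by rewrite -setUA cardsU1 cards2 !inE negb_or kx ky xy.
Qed.

Lemma card_missing_le3 G : separating G -> spanning G -> #|~: G| <= 3.
Proof.
by move=> sepG spanG; have [k [x [y [-> _]]]] := missing_edges sepG spanG; apply: card_set3_le.
Qed.

Lemma cut_forest k x y : cut_triple (k, (x, y)) -> forest (~: [set k; x; y]).
Proof.
move=> cut; apply/forall_inP => e eF; apply/negP => cycle_e.
have sepFe : separating (~: [set k; x; y] :\ e).
  by apply: contraNN (cut_separating cut); apply: connect_subset; apply: subD1set.
have spanFe : spanning (~: [set k; x; y] :\ e).
  apply/forallP => z; case/orP: (forallP (cut_spanning cut) z) => conn.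
    by apply/orP; left; apply: connect_setD1 cycle_e _ _ conn.
  by apply/orP; right; apply: connect_setD1 cycle_e _ _ conn.
have := card_missing_le3 sepFe spanFe; rewrite setCD setCK setUC cardsU1.
by rewrite card_cut_triple //; move: eF; rewrite inE => ->.
Qed.

Lemma forest_short_gap (k x : 'I_n.+2) : r <= k <= n -> x < r -> ~~ under_chord x ->
  ~~ forest (~: [set k; x; x]).
Proof.
move=> kr xr ux; have maxv : nat_of_ord (@ord_max n.+1) = n.+1 by [].
have chordF : ord_max \in ~: [set k; x; x] by rewrite !inE -!val_eqE /=; lia.
apply/forall_inP => /(_ _ chordF)/negP; apply.
rewrite /Cend1 /Cend2 /= ltnn (_ : _ :\ _ = ~: [set k; x; ord_max]).
  by apply: connect_arc_cut; lia.
by apply/setP => e; rewrite !inE; case: (e == k); case: (e == x); case: (e == ord_max).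
Qed.

Definition cut_complement (p : 'I_n.+2 * ('I_n.+2 * 'I_n.+2)) : {set 'I_n.+2} :=
  let: (k, (x, y)) := p in ~: [set k; x; y].

Lemma two_forests_cut :
  [set F | two_forest r.+1 i j F] = cut_complement @: [set p | cut_triple p].
Proof.
apply/setP => F; rewrite inE two_forestE; apply/and3P/imsetP => [[forF sepF spanF]|].
  have [k [x [y [setF /orP[cut|/and4P[/eqP yx kr xr ux]]]]]] := missing_edges sepF spanF.
    by exists (k, (x, y)); rewrite ?inE //= -setF setCK.
  by move: forF; rewrite -[F]setCK setF yx (negbTE (forest_short_gap kr xr ux)).
case=> [[k [x y]]]; rewrite inE => cut ->.
by split; [apply: cut_forest | apply: cut_separating | apply: cut_spanning].
Qed.

Lemma cut_complement_inj : {in [set p | cut_triple p] &, injective cut_complement}.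
Proof.
move=> [k [x y]] [k' [x' y']]; rewrite !inE /= => /and3P[kr xr yE] /and3P[kr' xr' yE'].
move/setC_inj => E; have memE u : (u \in [set k; x; y]) = (u \in [set k'; x'; y']).
  by rewrite E.
have := memE y'; have := memE y; have := memE x; have := memE k.
rewrite !inE !eqxx ?orbT -!val_eqE /= => memk memx memy memy'.
move: yE yE'; rewrite -!val_eqE /= => yE yE'; clear E memE.
have ek : nat_of_ord k = k' by clear memx memy memy'; lia.
have ey : nat_of_ord y = y' by clear memk memx; lia.
have ex : nat_of_ord x = x' by clear memk memy memy'; lia.
by rewrite (val_inj ek) (val_inj ex) (val_inj ey).
Qed.

Lemma card_cut_triples : #|[set p | cut_triple p]| =
  (n.+1 - r) * (r + (j.-1 - i.-1) * (r - (j.-1 - i.-1))).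
Proof.
set K := [set k : 'I_n.+2 | r <= k < n.+1].
set X := [set x : 'I_n.+2 | 0 <= x < r].
set U := [set x : 'I_n.+2 | i.-1 <= x < j.-1].
set V := [set y : 'I_n.+2 | 0 <= y < i.-1] :|: [set y : 'I_n.+2 | j.-1 <= y < r].
have -> : [set p | cut_triple p] = setX K (setX X [set ord_max] :|: setX U V).
  by apply/setP => -[k [x y]]; rewrite !inE /= -!val_eqE /=; have := ltn_ord y; lia.
have disjXU : setX X [set ord_max] :&: setX U V = set0.
  by apply/setP => -[x y]; rewrite !inE /= -!val_eqE /=; lia.
have disjV : [set y : 'I_n.+2 | 0 <= y < i.-1] :&: [set y : 'I_n.+2 | j.-1 <= y < r] = set0.
  by apply/setP => y; rewrite !inE; lia.
rewrite cardsX cardsU disjXU cards0 subn0 !cardsX cards1 cardsU disjV cards0 subn0.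
rewrite !card_ord_interval //; try lia.
by rewrite (_ : i.-1 - 0 + (r - j.-1) = r - (j.-1 - i.-1)) ?subn0 ?muln1 //; lia.
Qed.

Lemma card_two_forests : #|[set F : {set 'I_n.+2} | two_forest r.+1 i j F]| =
  (n.+1 - r) * (r + (j.-1 - i.-1) * (r - (j.-1 - i.-1))).
Proof.
by rewrite two_forests_cut card_in_imset ?card_cut_triples //; apply: cut_complement_inj.
Qed.

End TwoForests.

Theorem proposition7p6 (n t i j : nat) :
  (3 <= n)%N -> (2 <= t)%N -> (t <= uphalf n)%N ->
  (1 <= i)%N -> (i < j)%N -> (j <= t)%N -> j != i.+1 ->
  F2 n t i j =
    (if (i == 1) && (j == t) then (t - 1) * (n - t + 1)
     else (n - t + 1) * ((t - j + i) * (j - i + 1) - 1))%N.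
Proof.
(* The count does not need j <> i+1: a chord parallel to a cycle edge is an
   edge of its own. *)
move=> n3 t2 th i1 ij jt _; case: n n3 th => [//|n] n3 th.
have [r tE] : exists r, t = r.+1 by exists t.-1; lia.
rewrite /F2 tE card_two_forests; try lia.
have [d jE] : exists d, j = i + d by exists (j - i); lia.
have [s rE] : exists s, r = d + s by exists (r - d); lia.
rewrite (_ : j.-1 - i.-1 = d); last lia.
have -> : n.+1 - r.+1 + 1 = n.+1 - r by lia.
have -> : r - d = s by lia.
case: ifP => [/andP[/eqP i1' /eqP jt']|_].
  have -> : s = 0 by lia.
  by rewrite muln0 addn0 subn1 mulnC.
have -> : r.+1 - j + i = s.+1 by lia.
have -> : j - i + 1 = d.+1 by lia.
by rewrite rE mulSn mulnS; congr (_ * _); lia.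
Qed.
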